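(* Fix $0<q<1$. For every $G\in\mathcal G$ with $G\ne E$, the equation $\bar G(t)=\frac1q\bar E(t)$ has a unique solution $t\in[0,\infty)$; this solution equals $T_q(G)$.
   Context: $E(t)=1-e^{-t}$ is the standard exponential cdf, $\bar E=1-E$, $\bar G=1-G$. $\mathcal G=\{E\#F:F$ a probability distribution on $[1,\infty)\}$, where $(E\#F)(t)=\int E(t/\mu)\,dF(\mu)$ (scale mixtures of exponentials with scales $\ge1$). FDR functional: $T_q(G)=\inf\{t:\bar G(t)\ge\frac1q\bar E(t)\}$. *)

From HB Require Import structures.
From mathcomp Require Import all_boot all_order all_algebra.
From mathcomp Require Import all_classical all_reals all_analysis.
Set Implicit Arguments. Unset Strict Implicit. Unset Printing Implicit Defensive.
Import Order.TTheory GRing.Theory Num.Theory.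
Local Open Scope classical_set_scope.
Local Open Scope ring_scope.

Definition Ecdf {R : realType} (t : R) : R := 1 - expR (- t).
Definition Ebar {R : realType} (t : R) : R := 1 - Ecdf t.

(* scale mixture (E # F)(t) = \int E(t/mu) dF(mu), F a probability measure on R
   (concentrated on [1,oo[ by hypothesis in the theorem) *)
Definition mixcdf {R : realType} (F : probability R R) (t : R) : R :=
  Rintegral F setT (fun mu => Ecdf (t / mu)).

Definition survival {R : realType} (G : R -> R) (t : R) : R := 1 - G t.

Definition Tq {R : realType} (q : R) (G : R -> R) : R :=
  inf [set t : R | q^-1 * Ebar t <= survival G t].

From HB Require Import structures.
From mathcomp Require Import all_boot all_order all_algebra.
From mathcomp Require Import all_classical all_reals all_analysis.
From mathcomp Require Import measurable_realfun ring lra.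
Import Order.TTheory GRing.Theory Num.Theory.
Import numFieldNormedType.Exports.
Local Open Scope classical_set_scope.
Local Open Scope ring_scope.

(* Write a(mu) = 1 - 1/mu, which lies in [0, 1] for mu >= 1.  Since
   exp(-t/mu) = exp(-t) exp(t a(mu)), the survival function of G = E # F
   factors as Gbar(t) = Ebar(t) H(t) with H(t) = \int exp(t a(mu)) dF(mu), so
   the equation Gbar = Ebar/q reads H(t) = 1/q.  H is continuous and
   nondecreasing with H(0) = 1, and on [0, +oo[ it increases at least with
   slope m = \int a dF, which is positive unless a = 0 F-a.e., i.e. unless
   G = E.  Hence H crosses the level 1/q > 1 exactly once, at some t > 0, and
   {s | H(s) >= 1/q} = [t, +oo[, whose infimum T_q(G) is therefore t. *)

Lemma measurable_invr (R : realType) : measurable_fun [set: R] (@GRing.inv R).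
Proof.
have -> : [set: R] = [set 0] `|` [set x | x != 0].
  by apply/seteqP; split => x //= _; case: (eqVneq x 0); [left|right].
apply/measurable_funU => //; first by apply: open_measurable; exact: open_neq.
split; first exact: measurable_fun_set1.
apply: open_continuous_measurable_fun; first exact: open_neq.
by move=> x; rewrite inE => x0; exact: inv_continuous.
Qed.

Lemma expRM_sub_ge (R : realType) (s t a : R) : 0 <= s <= t -> 0 <= a ->
  (t - s) * a <= expR (t * a) - expR (s * a).
Proof.
move=> /andP[s0 st] a0; set d := (t - s) * a.
have d0 : 0 <= d by rewrite mulr_ge0 // subr_ge0.
have -> : expR (t * a) - expR (s * a) = expR (s * a) * (expR d - 1).
  by rewrite mulrBr mulr1 -expRD /d; congr (expR _ - _); ring.
rewrite -[leLHS]mul1r ler_pM //; first by rewrite -expR0 ler_expR mulr_ge0.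
by rewrite lerBrDl expR_ge1Dx.
Qed.

Lemma expRM_sub_le (R : realType) (s t a : R) : s <= t -> 0 <= a <= 1 ->
  expR (t * a) - expR (s * a) <= expR `|t| * (t - s).
Proof.
move=> st /andP[a0 a1]; set d := (t - s) * a.
have d0 : 0 <= d by rewrite mulr_ge0 // subr_ge0.
have -> : expR (t * a) - expR (s * a) = expR (t * a) * (1 - expR (- d)).
  by rewrite mulrBr mulr1 -expRD /d; congr (_ - expR _); ring.
rewrite ler_pM ?expR_ge0 //.
- by rewrite subr_ge0 expR_le1 oppr_le0.
- rewrite ler_expR (le_trans (ler_norm _)) // normrM (ger0_norm a0).
  by rewrite ler_piMr.
- have : d <= t - s by rewrite /d ler_piMr // subr_ge0.
  by have := expR_ge1Dx (- d); lra.
Qed.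

Lemma continuous_nondecreasing_slope_le (R : realType) (H : R -> R) :
  {homo H : s t / s <= t} ->
  (forall s t, s <= t -> H t - H s <= expR `|t| * (t - s)) ->
  continuous H.
Proof.
move=> H_homo H_slope x; apply/cvgrPdist_le => e e_gt0.
pose K := expR (`|x| + 1).
have K_gt0 : 0 < K := expR_gt0 _.
have lipK y : `|x - y| < 1 -> `|H x - H y| <= K * `|x - y|.
  move=> xy1; case: (leP y x) => [yx|/ltW xy].
    rewrite !ger0_norm ?subr_ge0 ?H_homo //.
    apply: le_trans (H_slope _ _ yx) _; rewrite ler_wpM2r ?subr_ge0 //.
    by rewrite ler_expR lerDl.
  rewrite distrC [`|x - y|]distrC !ger0_norm ?subr_ge0 ?H_homo //.
  apply: le_trans (H_slope _ _ xy) _; rewrite ler_wpM2r ?subr_ge0 // ler_expR.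
  have := ler_normD x (y - x); rewrite addrC subrK distrC; lra.
apply/nbhs_ballP; exists (Num.min 1 (e / K)) => /=.
  by rewrite lt_min ltr01 divr_gt0.
move=> y; rewrite /ball /= lt_min => /andP[xy1 xyK].
apply: le_trans (lipK _ xy1) _.
by rewrite mulrC -ler_pdivlMr // ltW.
Qed.

Section LevelCrossing.
Context {R : realType} {H : R -> R} {m : R}.
Hypothesis H_cont : continuous H.
Hypothesis H0 : H 0 = 1.
Hypothesis H_homo : {homo H : s t / s <= t}.
Hypothesis m_gt0 : 0 < m.
Hypothesis H_slope : forall s t, 0 <= s -> s <= t -> (t - s) * m <= H t - H s.

Lemma level_crossing c : 1 <= c -> exists2 t, 0 <= t & H t = c.
Proof.
move=> c_ge1; pose T := (c - 1) / m.
have T_ge0 : 0 <= T by rewrite divr_ge0 ?subr_ge0 // ltW.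
have HT : c <= H T.
  by have := H_slope _ _ (lexx 0) T_ge0; rewrite subr0 H0 /T divfK ?gt_eqF //; lra.
have [|t] := @IVT _ H 0 T c T_ge0 (continuous_subspaceT H_cont).
  by rewrite H0 ge_min c_ge1 le_max HT orbT.
by rewrite in_itv /= => /andP[t_ge0 _]; exists t.
Qed.

Lemma superlevel_setE c t : 1 < c -> H t = c -> [set s | c <= H s] = `[t, +oo[%classic.
Proof.
move=> c_gt1 Ht; apply/seteqP; split => s /=; rewrite in_itv /= andbT; last first.
  by move=> ts; rewrite -Ht H_homo.
move=> c_le_Hs; rewrite leNgt; apply/negP => st.
case: (leP 0 s) => [s_ge0|s_lt0].
  have : 0 < (t - s) * m by rewrite mulr_gt0 ?subr_gt0.
  by have := H_slope _ _ s_ge0 (ltW st); lra.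
by have := H_homo _ _ (ltW s_lt0); rewrite H0; lra.
Qed.

Lemma level_unique c s t : 1 < c -> H s = c -> H t = c -> s = t.
Proof.
move=> c_gt1 Hs Ht.
have le_level u v : H u = c -> H v = c -> v <= u.
  move=> Hu Hv; have : [set w | c <= H w] u by rewrite /= Hu.
  by rewrite (superlevel_setE _ _ c_gt1 Hv) /= in_itv /= andbT.
by apply/eqP; rewrite eq_le !le_level.
Qed.
End LevelCrossing.

Section Rate.
Context {R : realType}.

Lemma Ebar_expR (t : R) : Ebar t = expR (- t).
Proof. by rewrite /Ebar /Ecdf subKr. Qed.

Lemma Ebar_gt0 (t : R) : 0 < Ebar t.
Proof. by rewrite Ebar_expR expR_gt0. Qed.

(* F is concentrated on [1, +oo[, so replacing mu by max mu 1 changes no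
   F-integral, while it makes the rate bounded in [0, 1] everywhere. *)
Definition clamp1 (mu : R) : R := Num.max mu 1.

Definition rate (mu : R) : R := 1 - (clamp1 mu)^-1.

Lemma clamp1_ge1 mu : 1 <= clamp1 mu.
Proof. by rewrite le_max lexx orbT. Qed.

Lemma clamp1_gt0 mu : 0 < clamp1 mu.
Proof. exact: lt_le_trans ltr01 (clamp1_ge1 mu). Qed.

Lemma measurable_clamp1 : measurable_fun [set: R] clamp1.
Proof. exact: measurable_maxr. Qed.

Lemma rate_ge0 mu : 0 <= rate mu.
Proof. by rewrite subr_ge0 invf_le1 ?clamp1_gt0 ?clamp1_ge1. Qed.

Lemma rate_le1 mu : rate mu <= 1.
Proof. by rewrite lerBlDr lerDl invr_ge0 ltW ?clamp1_gt0. Qed.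

Lemma measurable_rate : measurable_fun [set: R] rate.
Proof.
apply: measurable_funB => //.
exact: measurableT_comp (@measurable_invr R) measurable_clamp1.
Qed.

Lemma norm_mulr_rate_le t mu : `|t * rate mu| <= `|t|.
Proof. by rewrite normrM (ger0_norm (rate_ge0 mu)) ler_piMr ?rate_le1. Qed.

Lemma expR_mulr_rate_le t mu : expR (t * rate mu) <= expR `|t|.
Proof. by rewrite ler_expR (le_trans (ler_norm _)) ?norm_mulr_rate_le. Qed.

Lemma measurable_expR_mulr_rate t :
  measurable_fun [set: R] (fun mu => expR (t * rate mu)).
Proof.
apply: measurableT_comp; first exact: measurable_expR.
exact: measurable_funM measurable_rate.
Qed.

End Rate.

Section ScaleMixture.
Context {R : realType} (F : probability R R).

Lemma bounded_integrable (g : R -> R) (K : R) : measurable_fun [set: R] g ->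
  (forall x, `|g x| <= K) -> F.-integrable [set: R] (EFin \o g).
Proof.
move=> mg gK; apply: measurable_bounded_integrable => //.
  by have := probability_setT F => /= ->; rewrite ltry.
exists K; split; first exact: num_real.
by move=> M KM x _; exact: le_trans (gK x) (ltW KM).
Qed.

Lemma Rintegral_cst_prob (k : R) : \int[F]_(x in [set: R]) k = k.
Proof.
by rewrite Rintegral_cst //; have := probability_setT F => /= ->; rewrite mulr1.
Qed.

Lemma integrable_rate : F.-integrable [set: R] (EFin \o @rate R).
Proof.
apply: (@bounded_integrable _ (1)); first exact: measurable_rate.
by move=> x; rewrite ger0_norm ?rate_ge0 ?rate_le1.
Qed.

Lemma integrable_expR_mulr_rate t :
  F.-integrable [set: R] (EFin \o (fun mu => expR (t * rate mu))).
Proof.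
apply: (@bounded_integrable _ (expR `|t|)); first exact: measurable_expR_mulr_rate.
by move=> x; rewrite ger0_norm ?expR_ge0 ?expR_mulr_rate_le.
Qed.

Definition mgf_rate (t : R) : R := \int[F]_(mu in [set: R]) expR (t * rate mu).

Definition mean_rate : R := \int[F]_(mu in [set: R]) rate mu.

Lemma mgf_rate0 : mgf_rate 0 = 1.
Proof.
rewrite /mgf_rate; under eq_Rintegral do rewrite mul0r expR0.
exact: Rintegral_cst_prob.
Qed.

Lemma mgf_rate_nondecreasing : {homo mgf_rate : s t / s <= t}.
Proof.
move=> s t st; apply: le_Rintegral => //; try exact: integrable_expR_mulr_rate.
by move=> x _; rewrite ler_expR ler_wpM2r ?rate_ge0.
Qed.

Lemma mgf_rateB s t : mgf_rate t - mgf_rate s =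
  \int[F]_(mu in [set: R]) (expR (t * rate mu) - expR (s * rate mu)).
Proof. by rewrite RintegralB //; exact: integrable_expR_mulr_rate. Qed.

Lemma integrable_expR_mulr_rateB s t : F.-integrable [set: R]
  (EFin \o (fun mu => expR (t * rate mu) - expR (s * rate mu))).
Proof.
exact: integrableB (integrable_expR_mulr_rate t) (integrable_expR_mulr_rate s).
Qed.

Lemma mgf_rate_slope_ge s t : 0 <= s -> s <= t ->
  (t - s) * mean_rate <= mgf_rate t - mgf_rate s.
Proof.
move=> s_ge0 st; rewrite mgf_rateB /mean_rate.
rewrite -RintegralZl //; last exact: integrable_rate.
apply: le_Rintegral => //.
- exact: integrableZl integrable_rate.
- exact: integrable_expR_mulr_rateB.
by move=> x _; rewrite expRM_sub_ge ?s_ge0 ?rate_ge0.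
Qed.

Lemma mgf_rate_slope_le s t : s <= t ->
  mgf_rate t - mgf_rate s <= expR `|t| * (t - s).
Proof.
move=> st; rewrite mgf_rateB -[leRHS]Rintegral_cst_prob.
apply: le_Rintegral => //; first exact: integrable_expR_mulr_rateB.
  exact: (@bounded_integrable _ (`|expR `|t| * (t - s)|)).
by move=> x _; rewrite expRM_sub_le ?rate_ge0 ?rate_le1.
Qed.

Lemma mgf_rate_continuous : continuous mgf_rate.
Proof.
exact: continuous_nondecreasing_slope_le mgf_rate_nondecreasing mgf_rate_slope_le.
Qed.

Lemma measurable_Ecdf_div t : measurable_fun [set: R] (fun mu => Ecdf (t / mu)).
Proof.
apply: measurable_funB => //; apply: measurableT_comp; first exact: measurable_expR.
apply: measurableT_comp => //.
exact: measurable_funM (@measurable_invr R).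
Qed.

Hypothesis F_support : F `[1, +oo[%classic = 1%E.

Lemma Rintegral_clamp1 (f : R -> R) : measurable_fun [set: R] f ->
  \int[F]_(mu in [set: R]) f mu = \int[F]_(mu in [set: R]) f (clamp1 mu).
Proof.
move=> mf; have F_null : F (~` `[1, +oo[%classic) = 0%E.
  by rewrite probability_setC // F_support subee.
congr fine; apply: ae_eq_integral => //.
- exact/measurable_EFinP.
- apply/measurable_EFinP; exact: measurableT_comp mf measurable_clamp1.
exists (~` `[1, +oo[%classic); split.
- exact: measurableC.
- exact: F_null.
move=> mu /= + mu_ge1; apply => _.
by move: mu_ge1; rewrite /clamp1 /= in_itv /= andbT => /max_idPl ->.
Qed.

Lemma survival_mixcdf t : survival (mixcdf F) t = Ebar t * mgf_rate t.
Proof.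
rewrite /survival /mixcdf (Rintegral_clamp1 _ (measurable_Ecdf_div t)).
have -> : (fun mu => Ecdf (t / clamp1 mu)) =
          (fun mu => 1 - Ebar t * expR (t * rate mu)).
  apply/funext => mu; rewrite /Ecdf Ebar_expR -expRD /rate.
  by congr (1 - expR _); ring.
rewrite RintegralB //; last 2 first.
- by apply: (@bounded_integrable _ 1) => // _; rewrite normr1.
- exact: integrableZl (integrable_expR_mulr_rate t).
by rewrite RintegralZl ?integrable_expR_mulr_rate // Rintegral_cst_prob subKr.
Qed.

Lemma ae_eq_rate0 : mean_rate = 0 -> ae_eq F [set: R] (EFin \o rate) (cst 0%E).
Proof.
move=> mean0; apply/(ae_eq_integral_abs _ measurableT).
  by apply/measurable_EFinP; exact: measurable_rate.
transitivity (\int[F]_mu (rate mu)%:E)%E.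
  by apply: eq_integral => mu _ /=; rewrite ger0_norm ?rate_ge0.
rewrite -(fineK (integrable_fin_num measurableT integrable_rate)).
by move: mean0; rewrite /mean_rate /Rintegral => ->.
Qed.

Lemma mean_rate_gt0 : mixcdf F <> Ecdf -> 0 < mean_rate.
Proof.
move=> GneE; rewrite lt_def Rintegral_ge0 ?andbT; last by move=> mu _; exact: rate_ge0.
apply/eqP => /ae_eq_rate0 rate_ae0; apply: GneE; apply/funext => t.
rewrite /mixcdf (Rintegral_clamp1 _ (measurable_Ecdf_div t)).
rewrite -[RHS]Rintegral_cst_prob; congr fine; apply: ae_eq_integral => //.
  apply/measurable_EFinP.
  exact: measurableT_comp (measurable_Ecdf_div t) measurable_clamp1.
apply: filterS rate_ae0 => mu /(_ I) [] /eqP + _.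
by rewrite subr_eq0 => /eqP <-; rewrite mulr1.
Qed.

End ScaleMixture.

Theorem lemma4p1 (R : realType) (q : R) (F : probability R R) :
  0 < q < 1 ->
  F `[1, +oo[%classic = 1%E ->
  mixcdf F <> Ecdf ->
  exists t : R,
    [/\ 0 <= t,
        survival (mixcdf F) t = q^-1 * Ebar t,
        (forall s : R, 0 <= s -> survival (mixcdf F) s = q^-1 * Ebar s -> s = t)
      & t = Tq q (mixcdf F)].
Proof.
move=> /andP[q_gt0 q_lt1] F_support GneE.
have c_gt1 : 1 < q^-1 by rewrite invf_gt1.
have H0 := mgf_rate0 F; have H_homo := mgf_rate_nondecreasing F.
have H_slope := mgf_rate_slope_ge F; have m_gt0 := mean_rate_gt0 F F_support GneE.
have levelE s : survival (mixcdf F) s = q^-1 * Ebar s <-> mgf_rate F s = q^-1.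
  rewrite (survival_mixcdf F F_support) [q^-1 * _]mulrC.
  by split=> [/(mulfI (lt0r_neq0 (Ebar_gt0 s)))|->].
have superlevelE : [set s | q^-1 * Ebar s <= survival (mixcdf F) s] =
                   [set s | q^-1 <= mgf_rate F s].
  apply/seteqP; split=> s /=;
    by rewrite (survival_mixcdf F F_support) [q^-1 * _]mulrC ler_pM2l ?Ebar_gt0.
have [t t_ge0 Ht] :=
  level_crossing (mgf_rate_continuous F) H0 m_gt0 H_slope _ (ltW c_gt1).
exists t; split=> //.
- exact/levelE.
- move=> s _ /levelE Hs.
  exact: level_unique H0 H_homo m_gt0 H_slope _ _ _ c_gt1 Hs Ht.
rewrite /Tq superlevelE.
by rewrite (superlevel_setE H0 H_homo m_gt0 H_slope _ _ c_gt1 Ht) inf_itv.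
Qed.
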